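(* For every $r\in[0,1]$, the density of $1$'s in $\operatorname{Mix}(0^\omega,1^\omega,r)$ exists and equals $r$.
   Context: For $X,Y\in2^\omega$, $(X\oplus Y)(2n)=X(n)$, $(X\oplus Y)(2n+1)=Y(n)$. The map $b:[0,1]\to2^\omega$ is defined recursively by $b(0)=0^\omega$, $b(1)=1^\omega$, $b(r)=0^\omega\oplus b(2r)$ for $0<r\le1/2$, $b(r)=b(2r-1)\oplus1^\omega$ for $1/2\le r<1$. Chunks: $n_j=\sum_{i<j}i$, $I_j=[n_j,n_{j+1})$. $\operatorname{Mix}(X_0,X_1,r)$ is the sequence whose restriction to $I_j$ equals $X_{b(r)(j)}\restriction I_j$ for every $j$. *)

From Stdlib Require Import Reals Lra Lia Arith.
Open Scope R_scope.

Definition cantor := nat -> bool.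

Definition zeros : cantor := fun _ => false.
Definition ones_seq : cantor := fun _ => true.

Definition join (X Y : cantor) : cantor :=
  fun n => if Nat.even n then X (Nat.div2 n) else Y (Nat.div2 n).

(** Position 0 is the
    only position whose recursion does not decrease the index; it is 1
    exactly when r = 1 (this is forced by the recursive equations, see
    [b_spec] below, which proves that [b] satisfies the paper's equations). *)
Fixpoint bk (k : nat) (r : R) (n : nat) : bool :=
  match k with
  | O => false
  | S k' =>
    match n with
    | O => if Req_EM_T r 1 then true else false
    | _ => if Nat.even n
           then (if Rle_dec r (1/2) then false else bk k' (2*r-1) (Nat.div2 n))
           else (if Rle_dec (1/2) r then true else bk k' (2*r) (Nat.div2 n))
    end
  end.

Definition b (r : R) : cantor := fun n => bk (S n) r n.

Fixpoint tri (j : nat) : nat :=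
  match j with O => O | S j' => (tri j' + j')%nat end.

(** chunk k = the j with k in I_j = [n_j, n_{j+1}) (the largest j with n_j <= k). *)
Fixpoint chunk_aux (j k : nat) : nat :=
  match j with
  | O => O
  | S j' => if Nat.leb (tri j) k then j else chunk_aux j' k
  end.
Definition chunk (k : nat) : nat := chunk_aux (S k) k.

Definition Mix (X0 X1 : cantor) (r : R) : cantor :=
  fun k => if b r (chunk k) then X1 k else X0 k.

Fixpoint count_ones (X : cantor) (n : nat) : nat :=
  match n with O => O | S n' => (count_ones X n' + (if X n' then 1 else 0))%nat end.

Definition density_is (X : cantor) (d : R) : Prop :=
  Un_cv (fun n => INR (count_ones X n) / INR n) d.

Lemma bk_fuel : forall k k' r n, (n < k)%nat -> (n < k')%nat -> bk k r n = bk k' r n.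
Proof.
  induction k as [|k IH]; intros k' r n Hk Hk'; [lia|].
  destruct k' as [|k']; [lia|].
  destruct n as [|n]; [reflexivity|]. cbn [bk].
  assert (H : (Nat.div2 (S n) < S n)%nat) by (apply Nat.lt_div2; lia).
  destruct (Nat.even (S n)); destruct (Rle_dec _ _); try reflexivity;
  apply IH; lia.
Qed.

Lemma b_unfold r n : (0 < n)%nat -> b r n =
  if Nat.even n
  then (if Rle_dec r (1/2) then false else b (2*r-1) (Nat.div2 n))
  else (if Rle_dec (1/2) r then true else b (2*r) (Nat.div2 n)).
Proof.
  intros Hn. unfold b. destruct n as [|m]; [lia|].
  change (bk (S (S m)) r (S m)) with
    (match S m with O => if Req_EM_T r 1 then true else false | _ =>
       if Nat.even (S m)
       then (if Rle_dec r (1/2) then false else bk (S m) (2*r-1) (Nat.div2 (S m)))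
       else (if Rle_dec (1/2) r then true else bk (S m) (2*r) (Nat.div2 (S m))) end).
  cbv iota beta.
  assert (H : (Nat.div2 (S m) < S m)%nat) by (apply Nat.lt_div2; lia).
  destruct (Nat.even (S m)); destruct (Rle_dec _ _); try reflexivity;
  apply bk_fuel; lia.
Qed.

Lemma b_zero n : b 0 n = false.
Proof.
  induction n as [n IH] using (well_founded_induction lt_wf).
  destruct n as [|m].
  - unfold b; simpl. destruct (Req_EM_T 0 1); [lra|reflexivity].
  - rewrite b_unfold by lia.
    destruct (Nat.even (S m)); destruct (Rle_dec _ _); try lra; try reflexivity.
    replace (2*0) with 0 by lra. apply IH. apply Nat.lt_div2; lia.
Qed.

Lemma b_one n : b 1 n = true.
Proof.
  induction n as [n IH] using (well_founded_induction lt_wf).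
  destruct n as [|m].
  - unfold b; simpl. destruct (Req_EM_T 1 1); [reflexivity|lra].
  - rewrite b_unfold by lia.
    destruct (Nat.even (S m)); destruct (Rle_dec _ _); try lra; try reflexivity.
    replace (2*1-1) with 1 by lra. apply IH. apply Nat.lt_div2; lia.
Qed.

Lemma b_spec :
  (forall n, b 0 n = zeros n) /\ (forall n, b 1 n = ones_seq n) /\
  (forall r, 0 < r <= 1/2 -> forall n, b r n = join zeros (b (2*r)) n) /\
  (forall r, 1/2 <= r < 1 -> forall n, b r n = join (b (2*r-1)) ones_seq n).
Proof.
  split; [exact b_zero|]. split; [exact b_one|]. split.
  - intros r Hr n. unfold join, zeros. destruct n as [|m].
    + unfold b; simpl. destruct (Req_EM_T r 1); [lra|reflexivity].
    + rewrite b_unfold by lia.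
      destruct (Nat.even (S m)); destruct (Rle_dec _ _); try lra; try reflexivity.
      assert (r = 1/2) by lra. subst r. replace (2*(1/2)) with 1 by lra.
      symmetry; apply b_one.
  - intros r Hr n. unfold join, ones_seq. destruct n as [|m].
    + unfold b; simpl. destruct (Req_EM_T r 1); [lra|].
      destruct (Req_EM_T (2*r-1) 1); [lra|reflexivity].
    + rewrite b_unfold by lia.
      destruct (Nat.even (S m)); destruct (Rle_dec _ _); try lra; try reflexivity.
      assert (r = 1/2) by lra. subst r. replace (2*(1/2)-1) with 0 by lra.
      symmetry; apply b_zero.
Qed.

From Stdlib Require Import Reals Lra Lia Arith.
Open Scope R_scope.

(** Write [stretch Y] for the sequence that repeats the bit [Y j] along the
    whole chunk I_j, so that [Mix zeros ones_seq r] is [stretch (b r)].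
    The theorem splits into two independent facts.

    - The bits of [b r] have density r.  Measure the error by the
      discrepancy [count_ones X N - d N].  Since [b r] is [0^omega (+) b(2r)]
      or [b(2r-1) (+) 1^omega], its discrepancy at 2M equals that of
      [b (doubling r)] at M; iterating K times gives a bound 2K + N/2^K.

    - Stretching along the chunks preserves density.  Up to the end of
      chunk J the stretched sequence counts the weighted sum
      sum_{j<J} j Y_j, which by Abel summation is J c(J) - sum_{j<=J} c(j)
      (c = partial counts of Y).  A discrepancy of Y that is o(N) thus
      yields a discrepancy o(J^2) = o(n) of the stretched sequence. *)

Definition discrepancy (X : cantor) (d : R) (N : nat) : R :=
  INR (count_ones X N) - d * INR N.

Lemma count_ones_le X N : (count_ones X N <= N)%nat.
Proof. induction N as [|N IH]; simpl; [lia|]. destruct (X N); lia. Qed.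

Lemma count_ones_ext X Y N : (forall n, X n = Y n) -> count_ones X N = count_ones Y N.
Proof. intros H. induction N as [|N IH]; simpl; [reflexivity|]. now rewrite IH, H. Qed.

Lemma density_is_ext X Y d : (forall n, X n = Y n) -> density_is X d -> density_is Y d.
Proof.
  intros Hext HX eps Heps. destruct (HX eps Heps) as [N0 HN0].
  exists N0. intros n Hn. rewrite <- (count_ones_ext X Y n Hext). now apply HN0.
Qed.

Lemma density_of_discrepancy X d :
  (forall eps, 0 < eps -> exists N0, forall N, (N0 <= N)%nat ->
     Rabs (discrepancy X d N) <= eps * INR N) ->
  density_is X d.
Proof.
  intros H eps Heps. destruct (H (eps / 2) ltac:(lra)) as [N0 HN0].
  exists (Nat.max N0 1). intros N HN. unfold R_dist, discrepancy in *.
  assert (HNpos : 0 < INR N) by (apply lt_0_INR; lia).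
  specialize (HN0 N ltac:(lia)).
  replace (INR (count_ones X N) / INR N - d)
    with ((INR (count_ones X N) - d * INR N) / INR N) by (field; lra).
  unfold Rdiv. rewrite Rabs_mult, Rabs_inv, (Rabs_pos_eq (INR N)) by lra.
  apply Rle_lt_trans with (eps / 2); [|lra].
  apply (Rmult_le_reg_r (INR N)); [lra|].
  rewrite Rmult_assoc, Rinv_l by lra. lra.
Qed.

Lemma discrepancy_of_density X d :
  density_is X d -> forall eps, 0 < eps -> exists C, forall N,
    Rabs (discrepancy X d N) <= eps * INR N + C.
Proof.
  intros HX eps Heps. destruct (HX eps Heps) as [N0 HN0].
  exists (INR N0 * (1 + Rabs d)). intros N. unfold discrepancy.
  pose proof (pos_INR N0). pose proof (Rabs_pos d).
  destruct (Nat.lt_ge_cases N N0) as [Hsmall | Hlarge].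
  - (* before the density is reached, count and [d N] are both at most [N0] *)
    pose proof (le_INR _ _ (count_ones_le X N)). pose proof (pos_INR (count_ones X N)).
    pose proof (lt_INR _ _ Hsmall). pose proof (pos_INR N).
    pose proof (Rabs_triang (INR (count_ones X N)) (- (d * INR N))) as Htri.
    rewrite Rabs_Ropp, Rabs_mult, (Rabs_pos_eq (INR N)),
      (Rabs_pos_eq (INR (count_ones X N))) in Htri by lra.
    unfold Rminus. nra.
  - destruct (Nat.eq_dec N 0) as [-> | HN].
    + simpl. rewrite Rmult_0_r, Rminus_0_r, Rabs_R0. nra.
    + specialize (HN0 N Hlarge). unfold R_dist in HN0.
      assert (HNpos : 0 < INR N) by (apply lt_0_INR; lia).
      replace (INR (count_ones X N) - d * INR N)
        with ((INR (count_ones X N) / INR N - d) * INR N) by (field; lra).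
      rewrite Rabs_mult, (Rabs_pos_eq (INR N)) by lra. nra.
Qed.

Lemma discrepancy_succ X d N : 0 <= d <= 1 ->
  Rabs (discrepancy X d (S N)) <= Rabs (discrepancy X d N) + 1.
Proof.
  intros Hd. unfold discrepancy. simpl count_ones.
  rewrite plus_INR, S_INR.
  set (e := INR (count_ones X N) - d * INR N).
  replace (INR (count_ones X N) + INR (if X N then 1%nat else 0%nat) - d * (INR N + 1))
    with (e + (INR (if X N then 1%nat else 0%nat) - d)) by (unfold e; ring).
  eapply Rle_trans; [apply Rabs_triang|]. apply Rplus_le_compat_l.
  apply Rabs_le. destruct (X N); simpl; lra.
Qed.

Lemma count_ones_join_zeros Y M : count_ones (join zeros Y) (2 * M) = count_ones Y M.
Proof.
  induction M as [|M IH]; [reflexivity|].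
  replace (2 * S M)%nat with (S (S (2 * M))) by lia. cbn [count_ones].
  rewrite IH. unfold join, zeros.
  rewrite Nat.even_succ, Nat.odd_mul, Nat.even_mul, Nat.div2_succ_double, Nat.div2_double; simpl. lia.
Qed.

Lemma count_ones_join_ones Y M :
  count_ones (join Y ones_seq) (2 * M) = (count_ones Y M + M)%nat.
Proof.
  induction M as [|M IH]; [reflexivity|].
  replace (2 * S M)%nat with (S (S (2 * M))) by lia. cbn [count_ones].
  rewrite IH. unfold join, ones_seq.
  rewrite Nat.even_succ, Nat.odd_mul, Nat.even_mul, Nat.div2_succ_double, Nat.div2_double; simpl.
  destruct (Y M); lia.
Qed.

(** The recursive equations of [b], extended to the closed half-intervals
    (at the endpoints [b 0] and [b 1] are constant, so both sides agree). *)
Lemma b_join_low r : 0 <= r <= 1/2 -> forall n, b r n = join zeros (b (2 * r)) n.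
Proof.
  intros Hr n. destruct (Req_dec r 0) as [-> | Hr0].
  - replace (2 * 0) with 0 by ring. unfold join, zeros.
    rewrite !b_zero. now destruct (Nat.even n).
  - destruct b_spec as (_ & _ & Hlow & _). apply Hlow. lra.
Qed.

Lemma b_join_high r : 1/2 <= r <= 1 -> forall n, b r n = join (b (2 * r - 1)) ones_seq n.
Proof.
  intros Hr n. destruct (Req_dec r 1) as [-> | Hr1].
  - replace (2 * 1 - 1) with 1 by ring. unfold join, ones_seq.
    rewrite !b_one. now destruct (Nat.even n).
  - destruct b_spec as (_ & _ & _ & Hhigh). apply Hhigh. lra.
Qed.

Definition doubling (r : R) : R := if Rle_dec r (1/2) then 2 * r else 2 * r - 1.

Lemma doubling_range r : 0 <= r <= 1 -> 0 <= doubling r <= 1.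
Proof. unfold doubling. destruct (Rle_dec r (1/2)); lra. Qed.

Lemma discrepancy_b_double r M : 0 <= r <= 1 ->
  discrepancy (b r) r (2 * M) = discrepancy (b (doubling r)) (doubling r) M.
Proof.
  intros Hr. unfold discrepancy, doubling. rewrite mult_INR. simpl (INR 2).
  destruct (Rle_dec r (1/2)).
  - rewrite (count_ones_ext _ _ _ (b_join_low r ltac:(lra))), count_ones_join_zeros.
    ring.
  - rewrite (count_ones_ext _ _ _ (b_join_high r ltac:(lra))), count_ones_join_ones.
    rewrite plus_INR. ring.
Qed.

Lemma discrepancy_b_bound K : forall N r, 0 <= r <= 1 ->
  Rabs (discrepancy (b r) r N) <= 2 * INR K + INR N * (/ 2) ^ K.
Proof.
  induction K as [|K IH]; intros N r Hr.
  - (* trivially, the count and [r N] both lie in [0, N] *)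
    simpl. apply Rabs_le. unfold discrepancy.
    pose proof (le_INR _ _ (count_ones_le (b r) N)).
    pose proof (pos_INR (count_ones (b r) N)). pose proof (pos_INR N). nra.
  - (* drop the last bit if [N] is odd, then halve *)
    set (M := Nat.div2 N).
    assert (Hdrop : Rabs (discrepancy (b r) r N)
                    <= Rabs (discrepancy (b r) r (2 * M)) + 1).
    { unfold M. rewrite (Nat.div2_odd N) at 1. destruct (Nat.odd N); simpl Nat.b2n.
      - rewrite Nat.add_1_r. now apply discrepancy_succ.
      - rewrite Nat.add_0_r. lra. }
    assert (HM : 2 * INR M <= INR N).
    { change 2 with (INR 2). rewrite <- mult_INR. apply le_INR.
      unfold M. rewrite (Nat.div2_odd N) at 2. lia. }
    rewrite discrepancy_b_double in Hdrop by exact Hr.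
    pose proof (IH M (doubling r) (doubling_range r Hr)) as Hhalf.
    assert (Hpow : 0 < (/ 2) ^ K) by (apply pow_lt; lra).
    rewrite S_INR. simpl pow. nra.
Qed.

Lemma b_density r : 0 <= r <= 1 -> density_is (b r) r.
Proof.
  intros Hr. apply density_of_discrepancy. intros eps Heps.
  destruct (pow_lt_1_zero (/ 2) ltac:(rewrite Rabs_pos_eq; lra) (eps / 2)
              ltac:(lra)) as [K HK].
  specialize (HK K (Nat.le_refl K)).
  rewrite Rabs_pos_eq in HK by (apply pow_le; lra).
  destruct (INR_unbounded (4 * INR K / eps)) as [N0 HN0].
  exists N0. intros N HN. apply le_INR in HN.
  eapply Rle_trans; [apply (discrepancy_b_bound K)|]; [exact Hr|].
  assert (HKN : 2 * INR K <= eps / 2 * INR N).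
  { apply (Rmult_lt_compat_l (eps / 2)) in HN0; [|lra].
    replace (eps / 2 * (4 * INR K / eps)) with (2 * INR K) in HN0 by (field; lra).
    nra. }
  pose proof (pos_INR N). nra.
Qed.

Lemma tri_succ j : tri (S j) = (tri j + j)%nat.
Proof. reflexivity. Qed.

Lemma tri_mono j j' : (j <= j')%nat -> (tri j <= tri j')%nat.
Proof. induction 1 as [|j' _ IH]; [lia|]. rewrite tri_succ. lia. Qed.

Lemma tri_double j : (2 * tri j + j = j * j)%nat.
Proof. induction j as [|j IH]; [reflexivity|]. rewrite tri_succ. nia. Qed.

Lemma chunk_spec k : (tri (chunk k) <= k < tri (chunk k) + chunk k)%nat.
Proof.
  rewrite <- tri_succ. unfold chunk.
  assert (Hgen : forall m, (k < tri (S m))%nat ->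
            (tri (chunk_aux m k) <= k < tri (S (chunk_aux m k)))%nat).
  { induction m as [|m IH]; intros Hk; [simpl in Hk; lia|].
    cbn [chunk_aux]. destruct (Nat.leb_spec (tri (S m)) k); [lia|].
    apply IH. lia. }
  apply Hgen. rewrite !tri_succ. lia.
Qed.

Lemma chunk_unique j k : (tri j <= k < tri j + j)%nat -> chunk k = j.
Proof.
  intros Hk. pose proof (chunk_spec k) as Hc.
  destruct (Nat.lt_trichotomy (chunk k) j) as [Hlt | [Heq | Hgt]]; [| exact Heq |].
  - pose proof (tri_mono (S (chunk k)) j Hlt). rewrite tri_succ in *. lia.
  - pose proof (tri_mono (S j) (chunk k) Hgt). rewrite tri_succ in *. lia.
Qed.

Lemma chunk_ge j k : (tri j <= k)%nat -> (j <= chunk k)%nat.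
Proof.
  intros Hk. pose proof (chunk_spec k) as Hc.
  destruct (Nat.le_gt_cases j (chunk k)) as [Hle | Hgt]; [exact Hle|].
  pose proof (tri_mono (S (chunk k)) j Hgt). rewrite tri_succ in *. lia.
Qed.

Lemma chunk_quadratic k : INR (chunk k) * (INR (chunk k) - 1) <= 2 * INR k.
Proof.
  pose proof (chunk_spec k) as Hc. pose proof (tri_double (chunk k)) as Hsq.
  apply (f_equal INR) in Hsq. rewrite plus_INR, !mult_INR in Hsq. simpl (INR 2) in Hsq.
  assert (Htri : INR (tri (chunk k)) <= INR k) by (apply le_INR; lia).
  lra.
Qed.

Definition stretch (Y : cantor) : cantor := fun k => Y (chunk k).

(** The number of ones of [stretch Y] in the first [J] chunks: [sum_{j<J} j Y_j]. *)
Fixpoint weighted_count (Y : cantor) (J : nat) : nat :=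
  match J with
  | O => O
  | S J' => (weighted_count Y J' + (if Y J' then J' else 0))%nat
  end.

Lemma count_stretch_block Y J i : (i <= J)%nat ->
  count_ones (stretch Y) (tri J + i) =
  (count_ones (stretch Y) (tri J) + (if Y J then i else 0))%nat.
Proof.
  induction i as [|i IH]; intros Hi.
  - rewrite Nat.add_0_r. destruct (Y J); lia.
  - rewrite Nat.add_succ_r. cbn [count_ones]. rewrite IH by lia.
    unfold stretch. rewrite (chunk_unique J) by lia. destruct (Y J); lia.
Qed.

Lemma count_stretch_tri Y J : count_ones (stretch Y) (tri J) = weighted_count Y J.
Proof.
  induction J as [|J IH]; [reflexivity|].
  rewrite tri_succ, count_stretch_block, IH by lia. reflexivity.
Qed.

Lemma weighted_count_abel Y d J :
  INR (weighted_count Y J) - d * INR (tri J) =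
  INR J * discrepancy Y d J - sum_f_R0 (discrepancy Y d) J.
Proof.
  induction J as [|J IH].
  - unfold discrepancy. simpl. ring.
  - cbn [weighted_count sum_f_R0]. rewrite tri_succ, !plus_INR.
    unfold discrepancy in *. cbn [count_ones]. rewrite plus_INR, S_INR.
    destruct (Y J); simpl (INR 1); simpl (INR 0); lra.
Qed.

Section LinearDiscrepancy.

Variables (Y : cantor) (d eps C : R).
Hypothesis eps_nonneg : 0 <= eps.
Hypothesis discrepancy_linear : forall N, Rabs (discrepancy Y d N) <= eps * INR N + C.

Lemma sum_discrepancy_bound J :
  Rabs (sum_f_R0 (discrepancy Y d) J) <= INR J * (eps * INR J + C).
Proof.
  induction J as [|J IH].
  - simpl. unfold discrepancy. simpl. rewrite Rmult_0_r, Rminus_0_r, Rabs_R0. lra.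
  - cbn [sum_f_R0]. eapply Rle_trans; [apply Rabs_triang|].
    pose proof (discrepancy_linear (S J)). rewrite S_INR in *.
    pose proof (pos_INR J). nra.
Qed.

Lemma weighted_count_bound J :
  Rabs (INR (weighted_count Y J) - d * INR (tri J)) <= 2 * INR J * (eps * INR J + C).
Proof.
  rewrite weighted_count_abel. unfold Rminus.
  eapply Rle_trans; [apply Rabs_triang|]. rewrite Rabs_Ropp, Rabs_mult, Rabs_pos_eq
    by apply pos_INR.
  pose proof (discrepancy_linear J). pose proof (sum_discrepancy_bound J).
  pose proof (pos_INR J). nra.
Qed.

(** At position [n], in chunk [J], the discrepancy of [stretch Y] is
    [O(eps J^2 + J)]: the full chunks contribute the weighted count, the
    current partial chunk at most [(1 + |d|) J]. *)
Lemma stretch_discrepancy_bound n :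
  Rabs (discrepancy (stretch Y) d n) <=
  2 * INR (chunk n) * (eps * INR (chunk n) + C) + (1 + Rabs d) * INR (chunk n).
Proof.
  set (J := chunk n). pose proof (chunk_spec n) as Hc. fold J in Hc.
  set (i := (n - tri J)%nat).
  assert (Hn : n = (tri J + i)%nat) by (unfold i; lia).
  assert (Hi : INR i <= INR J) by (apply le_INR; unfold i; lia).
  unfold discrepancy. rewrite Hn, count_stretch_block, count_stretch_tri by (unfold i; lia).
  rewrite !plus_INR.
  replace (INR (weighted_count Y J) + INR (if Y J then i else 0%nat) - d * (INR (tri J) + INR i))
    with ((INR (weighted_count Y J) - d * INR (tri J))
          + (INR (if Y J then i else 0%nat) - d * INR i)) by ring.
  eapply Rle_trans; [apply Rabs_triang|]. apply Rplus_le_compat.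
  - apply weighted_count_bound.
  - eapply Rle_trans; [apply Rabs_triang|]. rewrite Rabs_Ropp, Rabs_mult.
    rewrite (Rabs_pos_eq (INR i)) by apply pos_INR.
    pose proof (pos_INR i). pose proof (Rabs_pos d).
    destruct (Y J); simpl (INR 0); rewrite ?Rabs_R0, ?(Rabs_pos_eq (INR i)) by lra; nra.
Qed.

End LinearDiscrepancy.

Lemma stretch_density Y d : density_is Y d -> density_is (stretch Y) d.
Proof.
  intros HY. apply density_of_discrepancy. intros eps Heps.
  destruct (discrepancy_of_density Y d HY (eps / 8) ltac:(lra)) as [C HC].
  (* past chunk [J1], the linear term [B J] is absorbed by [eps/2 n] *)
  set (B := eps / 4 + 2 * C + 1 + Rabs d).
  destruct (INR_unbounded (1 + 4 * B / eps)) as [J1 HJ1].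
  exists (tri J1). intros n Hn.
  set (J := chunk n).
  assert (HJ : 1 + 4 * B / eps < INR J)
    by (apply Rlt_le_trans with (INR J1); [lra | apply le_INR, chunk_ge, Hn]).
  assert (HBJ : B <= eps / 4 * (INR J - 1)).
  { replace B with (eps / 4 * (4 * B / eps)) by (field; lra). nra. }
  pose proof (stretch_discrepancy_bound Y d (eps / 8) C ltac:(lra) HC n) as Hbound.
  pose proof (chunk_quadratic n) as Hquad. fold J in Hbound, Hquad.
  assert (Hsplit : 2 * INR J * (eps / 8 * INR J + C) + (1 + Rabs d) * INR J
                   = eps / 4 * (INR J * (INR J - 1)) + B * INR J)
    by (unfold B; field).
  assert (HBJ' : B * INR J <= eps / 4 * (INR J * (INR J - 1))).
  { pose proof (pos_INR J). nra. }
  nra.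
Qed.

Lemma mix_zeros_ones_stretch r k : stretch (b r) k = Mix zeros ones_seq r k.
Proof. unfold stretch, Mix, zeros, ones_seq. now destruct (b r (chunk k)). Qed.

Theorem lemma2p9 : forall r : R, 0 <= r <= 1 ->
  density_is (Mix zeros ones_seq r) r.
Proof.
  intros r Hr.
  apply (density_is_ext (stretch (b r))); [apply mix_zeros_ones_stretch|].
  apply stretch_density, b_density, Hr.
Qed.
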